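(* Let $\phi_{\mathrm{NH}}(y,t)=t^{-1/2}\exp(y^2/(2t))$ and $\log\Phi(\boldsymbol x,t)=\log\sum_{i=1}^N\phi_{\mathrm{NH}}(x_i,t)$ on $\mathbb{R}^N\times(0,\infty)$. Fix $(\boldsymbol x,t)$ and $(\Delta\boldsymbol x,\Delta t)$ with $t>0$ and $t+\Delta t>0$, and let $(\boldsymbol x(s),t(s))=(\boldsymbol x,t)+s(\Delta\boldsymbol x,\Delta t)$, $s\in[0,1]$, with $$t_\star:=\min_{s\in[0,1]}t(s),\qquad K_{\rm seg}:=\sup_{s\in[0,1]}\max_{1\le i\le N}\frac{x_i(s)^2}{t(s)}.$$ Then $\log\Phi$ satisfies $(1,2)$-generalized self-concordance on the segment $\mathcal C=\{(\boldsymbol x(s),t(s)):s\in[0,1]\}$ with respect to the norm $$\|(\bar{\boldsymbol x},\bar t)\|_*=A_x\|\bar{\boldsymbol x}\|_\infty+A_t|\bar t|,\qquad A_x=\frac{8\sqrt{K_{\rm seg}\vee1}}{\sqrt{t_\star}},\quad A_t=\frac{16(K_{\rm seg}\vee1)}{t_\star}.$$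
   Context: A $C^3$ function $f$ on an open set $\mathrm{dom}(f)\subseteq\mathbb{R}^p$ satisfies $(M,2)$-generalized self-concordance in a norm $\|\cdot\|_*$ on $\mathcal C\subseteq\mathrm{dom}(f)$ if for all $\boldsymbol x\in\mathcal C$ and $\boldsymbol u,\boldsymbol v\in\mathbb{R}^p$: $|\nabla^3f(\boldsymbol x)[\boldsymbol u,\boldsymbol u,\boldsymbol v]|\le M\|\boldsymbol v\|_*\,\boldsymbol u^{\mathsf T}\nabla^2f(\boldsymbol x)\boldsymbol u$. $a\vee b=\max\{a,b\}$. *)

(* Vectors in R^N are functions nat -> R;
   only the coordinates 0..N-1 are used. *)
From Stdlib Require Import Reals List.
From Coquelicot Require Import Coquelicot.
Open Scope R_scope.

Definition phiNH (y t : R) : R := / sqrt t * exp (y ^ 2 / (2 * t)).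

Definition sumN (N : nat) (g : nat -> R) : R :=
  fold_right Rplus 0 (map g (seq 0 N)).

(* max_{1<=i<=N} g(i) for nonnegative g (used for the sup-norm and K_seg) *)
Definition maxN (N : nat) (g : nat -> R) : R :=
  fold_right Rmax 0 (map g (seq 0 N)).

Definition logPhi (N : nat) (x : nat -> R) (t : R) : R :=
  ln (sumN N (fun i => phiNH (x i) t)).

Definition plane (f : (nat -> R) -> R -> R) (x : nat -> R) (t : R)
  (ux : nat -> R) (ut : R) (vx : nat -> R) (vt : R) (a b : R) : R :=
  f (fun i => x i + a * ux i + b * vx i) (t + a * ut + b * vt).

(* u^T (nabla^2 f)(x,t) u  as the second directional derivative *)
Definition hess_form (f : (nat -> R) -> R -> R) (x : nat -> R) (t : R)
  (ux : nat -> R) (ut : R) : R :=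
  Derive (fun a => Derive (fun a' => plane f x t ux ut ux ut a' 0) a) 0.

(* (nabla^3 f)(x,t)[u,u,v] as the mixed directional derivative d_b d_a^2 *)
Definition third_form (f : (nat -> R) -> R -> R) (x : nat -> R) (t : R)
  (ux : nat -> R) (ut : R) (vx : nat -> R) (vt : R) : R :=
  Derive (fun b =>
    Derive (fun a => Derive (fun a' => plane f x t ux ut vx vt a' b) a) 0) 0.

Definition seg_x (x dx : nat -> R) (s : R) : nat -> R := fun i => x i + s * dx i.
Definition seg_t (t dt s : R) : R := t + s * dt.

Definition t_star (t dt : R) : R :=
  real (Glb_Rbar (fun r => exists s, 0 <= s <= 1 /\ r = seg_t t dt s)).

Definition K_seg (N : nat) (x dx : nat -> R) (t dt : R) : R :=
  real (Lub_Rbar (fun r => exists s, 0 <= s <= 1 /\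
          r = maxN N (fun i => (seg_x x dx s i) ^ 2 / seg_t t dt s))).

Definition A_x (N : nat) (x dx : nat -> R) (t dt : R) : R :=
  8 * sqrt (Rmax (K_seg N x dx t dt) 1) / sqrt (t_star t dt).
Definition A_t (N : nat) (x dx : nat -> R) (t dt : R) : R :=
  16 * Rmax (K_seg N x dx t dt) 1 / t_star t dt.

Definition star_norm (N : nat) (x dx : nat -> R) (t dt : R)
  (vx : nat -> R) (vt : R) : R :=
  A_x N x dx t dt * maxN N (fun i => Rabs (vx i)) + A_t N x dx t dt * Rabs vt.

Definition gen_self_concordant (N : nat) (M : R) (f : (nat -> R) -> R -> R)
  (C : (nat -> R) -> R -> Prop) (nrm : (nat -> R) -> R -> R) : Prop :=
  forall x t, C x t ->
  forall (ux : nat -> R) (ut : R) (vx : nat -> R) (vt : R),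
    Rabs (third_form f x t ux ut vx vt) <= M * nrm vx vt * hess_form f x t ux ut.

From Pilot Require Import Defs.
From Stdlib Require Import Reals List Lra Lia Psatz FunctionalExtensionality.
From Coquelicot Require Import Coquelicot.
Open Scope R_scope.

(* Along a line in direction u, log Phi = ln (sum_i e_i) with weights e_i = phi_NH(x_i, t) > 0
   whose logarithmic derivatives are X_i = d_u ln phi_NH(x_i, t).  Hence the Hessian form is the
   e-weighted mean of Q_i + (X_i - <X>)^2, with Q_i >= 0 the Hessian form of ln phi_NH, and its
   derivative along v is the weighted mean of
     R_i + 2 (X_i - <X>) P_i + (Z_i - <Z>) (Q_i + (X_i - <X>)^2),
   where Z_i, P_i, R_i are the v-derivatives of ln phi_NH, X_i and Q_i.  Measuring x-components
   in units of sqrt t and t-components in units of t, one has |x_i| / sqrt t <= sqrt K with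
   K = K_seg \/ 1, and AM-GM bounds each summand by (5 sqrt K |vx|_oo / sqrt t + 8 K |vt| / t)
   times Q_i + (X_i - <X>)^2.  Since t >= t_star along the segment, that factor is at most
   ||(vx, vt)||_*. *)

Definition lsum (l : list nat) (f : nat -> R) : R := fold_right Rplus 0 (map f l).

Lemma lsum_nonneg l f : (forall i, In i l -> 0 <= f i) -> 0 <= lsum l f.
Proof.
  unfold lsum. induction l as [|j l IH]; intros H; simpl; [lra|].
  assert (0 <= f j) by (apply H; simpl; auto).
  assert (0 <= fold_right Rplus 0 (map f l)) by (apply IH; intros; apply H; simpl; auto).
  lra.
Qed.

Lemma lsum_pos l f : l <> nil -> (forall i, In i l -> 0 < f i) -> 0 < lsum l f.
Proof.
  destruct l as [|j l]; intros Hl H; [congruence|].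
  assert (0 < f j) by (apply H; simpl; auto).
  assert (0 <= lsum l f) by (apply lsum_nonneg; intros; left; apply H; simpl; auto).
  unfold lsum in *; simpl; lra.
Qed.

Lemma Rabs_lsum_le l f g : (forall i, In i l -> Rabs (f i) <= g i) -> Rabs (lsum l f) <= lsum l g.
Proof.
  unfold lsum. induction l as [|j l IH]; intros H; simpl; [rewrite Rabs_R0; lra|].
  eapply Rle_trans; [apply Rabs_triang|].
  apply Rplus_le_compat; [apply H; simpl; auto | apply IH; intros; apply H; simpl; auto].
Qed.

Lemma lsum_scal l c f : lsum l (fun i => c * f i) = c * lsum l f.
Proof.
  induction l as [|j l IH]; unfold lsum in *; cbn [fold_right map]; [ring | rewrite IH; ring].
Qed.

Lemma lsum_sub_scal l e f c :
  lsum l (fun i => e i * (f i - c)) = lsum l (fun i => e i * f i) - c * lsum l e.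
Proof.
  induction l as [|j l IH]; unfold lsum in *; cbn [fold_right map]; [ring | rewrite IH; ring].
Qed.

Lemma lsum_centered_square l e X Q m :
  lsum l (fun i => e i * (Q i + (X i - m) ^ 2)) =
  lsum l (fun i => e i * (X i * X i + Q i)) - 2 * m * lsum l (fun i => e i * X i)
  + m ^ 2 * lsum l e.
Proof.
  induction l as [|j l IH]; unfold lsum in *; cbn [fold_right map]; [ring | rewrite IH; ring].
Qed.

Lemma lsum_centered_cubic l e X Z Q P R3 m n :
  lsum l (fun i => e i * (R3 i + 2 * (X i - m) * P i + (Z i - n) * (Q i + (X i - m) ^ 2))) =
  lsum l (fun i => e i * (Z i * (X i * X i + Q i) + (2 * X i * P i + R3 i)))
  - n * lsum l (fun i => e i * (X i * X i + Q i))
  - 2 * m * lsum l (fun i => e i * (Z i * X i + P i))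
  + m ^ 2 * lsum l (fun i => e i * Z i) + 2 * m * n * lsum l (fun i => e i * X i)
  - m ^ 2 * n * lsum l e.
Proof.
  induction l as [|j l IH]; unfold lsum in *; cbn [fold_right map]; [ring | rewrite IH; ring].
Qed.

Lemma is_derive_lsum l (f : nat -> R -> R) (f' : nat -> R) s :
  (forall i, is_derive (f i) s (f' i)) ->
  is_derive (fun s => lsum l (fun i => f i s)) s (lsum l f').
Proof.
  intros H. induction l as [|j l IH]; simpl.
  - apply (is_derive_const 0).
  - apply (is_derive_plus (fun s => f j s) (fun s => lsum l (fun i => f i s))); auto.
Qed.

Definition wmean (l : list nat) (e f : nat -> R) : R := lsum l (fun i => e i * f i) / lsum l e.

Section WeightedMean.
Variables (l : list nat) (e : nat -> R).
Hypothesis l_nonnil : l <> nil.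
Hypothesis e_pos : forall i, In i l -> 0 < e i.

Let lsum_e_pos : 0 < lsum l e := lsum_pos l e l_nonnil e_pos.

Lemma wmean_const c : wmean l e (fun _ => c) = c.
Proof.
  unfold wmean. replace (lsum l (fun i => e i * c)) with (c * lsum l e).
  - field. lra.
  - rewrite <- lsum_scal. f_equal. apply functional_extensionality. intro; ring.
Qed.

Lemma wmean_scal c f : wmean l e (fun i => c * f i) = c * wmean l e f.
Proof.
  unfold wmean. replace (lsum l (fun i => e i * (c * f i))) with (c * lsum l (fun i => e i * f i)).
  - field. lra.
  - rewrite <- lsum_scal. f_equal. apply functional_extensionality. intro; ring.
Qed.

Lemma wmean_nonneg f : (forall i, In i l -> 0 <= f i) -> 0 <= wmean l e f.
Proof.
  intros H. apply Rdiv_le_0_compat; [|exact lsum_e_pos].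
  apply lsum_nonneg. intros i Hi. apply Rmult_le_pos; [left; auto | auto].
Qed.

Lemma Rabs_wmean_le f g : (forall i, In i l -> Rabs (f i) <= g i) ->
  Rabs (wmean l e f) <= wmean l e g.
Proof.
  intros H. unfold wmean, Rdiv.
  rewrite Rabs_mult, Rabs_inv, (Rabs_pos_eq (lsum l e)) by lra.
  apply Rmult_le_compat_r; [left; apply Rinv_0_lt_compat; lra|].
  apply Rabs_lsum_le. intros i Hi.
  rewrite Rabs_mult, (Rabs_pos_eq (e i)) by (left; auto).
  apply Rmult_le_compat_l; [left|]; auto.
Qed.

Lemma Rabs_wmean_sub_le f c B : (forall i, In i l -> Rabs (f i - c) <= B) ->
  Rabs (wmean l e f - c) <= B.
Proof.
  intros H.
  replace (wmean l e f - c) with (wmean l e (fun i => f i - c))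
    by (unfold wmean; rewrite lsum_sub_scal; field; lra).
  rewrite <- (wmean_const B). apply Rabs_wmean_le. exact H.
Qed.

Lemma wmean_variance X Q :
  wmean l e (fun i => X i * X i + Q i) - wmean l e X * wmean l e X =
  wmean l e (fun i => Q i + (X i - wmean l e X) ^ 2).
Proof.
  unfold wmean. rewrite lsum_centered_square. field. lra.
Qed.

Lemma wmean_third_central X Z Q P R3 :
  let m := wmean l e X in let n := wmean l e Z in
  wmean l e (fun i => Z i * (X i * X i + Q i) + (2 * X i * P i + R3 i))
  - n * wmean l e (fun i => X i * X i + Q i)
  - 2 * m * (wmean l e (fun i => Z i * X i + P i) - n * m) =
  wmean l e (fun i => R3 i + 2 * (X i - m) * P i + (Z i - n) * (Q i + (X i - m) ^ 2)).
Proof.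
  intros m n. unfold m, n, wmean. rewrite lsum_centered_cubic. field. lra.
Qed.

End WeightedMean.

Lemma is_derive_ln_lsum l (e : nat -> R -> R) (g : nat -> R) s :
  0 < lsum l (fun i => e i s) -> (forall i, is_derive (e i) s (e i s * g i)) ->
  is_derive (fun s => ln (lsum l (fun i => e i s))) s (wmean l (fun i => e i s) g).
Proof.
  intros Hpos He.
  set (S := fun s => lsum l (fun i => e i s)).
  assert (HS : is_derive S s (lsum l (fun i => e i s * g i))) by (apply is_derive_lsum; exact He).
  change (is_derive (fun s => ln (S s)) s (lsum l (fun i => e i s * g i) / S s)).
  auto_derive; [repeat split; [eexists; exact HS | exact Hpos] |].
  rewrite (is_derive_unique (fun x : R => S x) s _ HS). field. unfold S; lra.
Qed.

Lemma is_derive_wmean l (e f : nat -> R -> R) (g f' : nat -> R) s :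
  0 < lsum l (fun i => e i s) ->
  (forall i, is_derive (e i) s (e i s * g i)) -> (forall i, is_derive (f i) s (f' i)) ->
  is_derive (fun s => wmean l (fun i => e i s) (fun i => f i s)) s
    (wmean l (fun i => e i s) (fun i => g i * f i s + f' i)
     - wmean l (fun i => e i s) g * wmean l (fun i => e i s) (fun i => f i s)).
Proof.
  intros Hpos He Hf.
  assert (Hef : forall i, is_derive (fun s => e i s * f i s) s (e i s * (g i * f i s + f' i))).
  { intro i.
    replace (e i s * (g i * f i s + f' i)) with (e i s * g i * f i s + e i s * f' i) by ring.
    apply (is_derive_mult (e i) (f i)); [exact (He i) | exact (Hf i) | intros; apply Rmult_comm]. }
  set (S := fun s => lsum l (fun i => e i s)).
  set (Sf := fun s => lsum l (fun i => e i s * f i s)).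
  assert (Hnum : is_derive Sf s (lsum l (fun i => e i s * (g i * f i s + f' i))))
    by (apply is_derive_lsum; exact Hef).
  assert (Hden : is_derive S s (lsum l (fun i => e i s * g i))) by (apply is_derive_lsum; exact He).
  change (is_derive (fun s => Sf s / S s) s
    (lsum l (fun i => e i s * (g i * f i s + f' i)) / S s
     - lsum l (fun i => e i s * g i) / S s * (Sf s / S s))).
  auto_derive; [repeat split; [eexists; exact Hnum | eexists; exact Hden | unfold S; lra]|].
  rewrite (is_derive_unique (fun x : R => Sf x) s _ Hnum),
    (is_derive_unique (fun x : R => S x) s _ Hden).
  unfold S in *. field. lra.
Qed.

Lemma is_derive_wmean_variance l (e X Q : nat -> R -> R) (Z P R3 : nat -> R) b :
  l <> nil -> locally b (fun b => forall i, In i l -> 0 < e i b) ->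
  (forall i, is_derive (e i) b (e i b * Z i)) ->
  (forall i, is_derive (X i) b (P i)) -> (forall i, is_derive (Q i) b (R3 i)) ->
  let m := wmean l (fun i => e i b) (fun i => X i b) in
  let n := wmean l (fun i => e i b) Z in
  is_derive
    (fun b => wmean l (fun i => e i b)
                (fun i => Q i b + (X i b - wmean l (fun i => e i b) (fun i => X i b)) ^ 2)) b
    (wmean l (fun i => e i b)
       (fun i => R3 i + 2 * (X i b - m) * P i + (Z i - n) * (Q i b + (X i b - m) ^ 2))).
Proof.
  intros Hl He_loc He HX HQ m n.
  assert (He_pos : forall i, In i l -> 0 < e i b) by exact (locally_singleton _ _ He_loc).
  assert (HS : 0 < lsum l (fun i => e i b)) by (apply lsum_pos; auto).
  set (M := fun b => wmean l (fun i => e i b) (fun i => X i b)).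
  set (F := fun b => wmean l (fun i => e i b) (fun i => X i b * X i b + Q i b)).
  apply (is_derive_ext_loc (fun b => F b - M b * M b)).
  { eapply filter_imp; [|exact He_loc]. intros b' Hb'. exact (wmean_variance l _ Hl Hb' _ _). }
  set (dM := wmean l (fun i => e i b) (fun i => Z i * X i b + P i) - n * m).
  set (dF := wmean l (fun i => e i b)
                (fun i => Z i * (X i b * X i b + Q i b) + (2 * X i b * P i + R3 i))
             - n * F b).
  assert (HM : is_derive M b dM) by (apply is_derive_wmean; auto).
  assert (HF : is_derive F b dF).
  { apply is_derive_wmean; auto. intro i.
    replace (2 * X i b * P i + R3 i) with (P i * X i b + X i b * P i + R3 i) by ring.
    apply (is_derive_plus (fun b => X i b * X i b) (Q i)); [|apply HQ].
    apply (is_derive_mult (X i) (X i)); [apply HX | apply HX | intros; apply Rmult_comm]. }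
  replace (wmean l (fun i => e i b) _) with (dF - (dM * m + m * dM))
    by (unfold dF, dM, F, m, n; rewrite <- (wmean_third_central l _ Hl He_pos); ring).
  apply (is_derive_minus F (fun b => M b * M b)); [exact HF|].
  apply (is_derive_mult M M); [exact HM | exact HM | intros; apply Rmult_comm].
Qed.

Definition dlogphi (Y T p q : R) : R := - q / (2 * T) + Y * p / T - Y ^ 2 * q / (2 * T ^ 2).
Definition d2logphi (Y T p1 q1 p2 q2 : R) : R :=
  q1 * q2 / (2 * T ^ 2) + (p1 - Y / T * q1) * (p2 - Y / T * q2) / T.
Definition d3logphi (Y T p1 q1 p2 q2 : R) : R :=
  - q1 ^ 2 * q2 / T ^ 3 - 2 * (p1 - Y / T * q1) * q1 * (p2 - Y / T * q2) / T ^ 2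
  - (p1 - Y / T * q1) ^ 2 * q2 / T ^ 2.

Section LogPhiCalculus.
Variables (Yf Tf : R -> R) (s p q : R).
Hypothesis Yf_deriv : is_derive Yf s p.
Hypothesis Tf_deriv : is_derive Tf s q.
Hypothesis Tf_pos : 0 < Tf s.

Lemma is_derive_phiNH :
  is_derive (fun s => phiNH (Yf s) (Tf s)) s (phiNH (Yf s) (Tf s) * dlogphi (Yf s) (Tf s) p q).
Proof.
  assert (Hsqrt : 0 < sqrt (Tf s)) by (apply sqrt_lt_R0; lra).
  unfold phiNH, dlogphi.
  auto_derive; [repeat split; try (eexists; eassumption); nra |].
  rewrite (is_derive_unique (fun x : R => Yf x) s p Yf_deriv),
    (is_derive_unique (fun x : R => Tf x) s q Tf_deriv).
  rewrite sqrt_sqrt by lra.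
  replace (Yf s * (Yf s * 1) * / (2 * Tf s)) with (Yf s ^ 2 / (2 * Tf s)) by (unfold Rdiv; ring).
  field. lra.
Qed.

Lemma is_derive_dlogphi p' q' :
  is_derive (fun s => dlogphi (Yf s) (Tf s) p' q') s (d2logphi (Yf s) (Tf s) p' q' p q).
Proof.
  unfold dlogphi, d2logphi.
  auto_derive; [repeat split; try (eexists; eassumption); nra |].
  rewrite (is_derive_unique (fun x : R => Yf x) s p Yf_deriv),
    (is_derive_unique (fun x : R => Tf x) s q Tf_deriv).
  field. lra.
Qed.

Lemma is_derive_d2logphi p' q' :
  is_derive (fun s => d2logphi (Yf s) (Tf s) p' q' p' q') s (d3logphi (Yf s) (Tf s) p' q' p q).
Proof.
  unfold d2logphi, d3logphi.
  auto_derive; [repeat split; try (eexists; eassumption); nra |].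
  rewrite (is_derive_unique (fun x : R => Yf x) s p Yf_deriv),
    (is_derive_unique (fun x : R => Tf x) s q Tf_deriv).
  field. lra.
Qed.

End LogPhiCalculus.

Lemma phiNH_pos Y T : 0 < T -> 0 < phiNH Y T.
Proof.
  intros HT. apply Rmult_lt_0_compat; [|apply exp_pos].
  apply Rinv_0_lt_compat, sqrt_lt_R0; lra.
Qed.

Lemma d2logphi_diag_nonneg Y T p q : 0 < T -> 0 <= d2logphi Y T p q p q.
Proof.
  intros HT. unfold d2logphi.
  assert (0 < 2 * T ^ 2) by (apply Rmult_lt_0_compat; [lra | apply pow_lt; lra]).
  assert (0 <= q * q / (2 * T ^ 2)) by (apply Rdiv_le_0_compat; [apply Rle_0_sqr | lra]).
  assert (0 <= (p - Y / T * q) * (p - Y / T * q) / T)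
    by (apply Rdiv_le_0_compat; [apply Rle_0_sqr | lra]).
  lra.
Qed.

Lemma Rabs_normalized_cross_le (a b d M nu E Mm : R) : Rabs nu <= E -> Rabs M <= Mm ->
  Rabs ((- b ^ 2 * nu - 2 * a * b * M - a ^ 2 * nu) + 2 * d * (b * nu / 2 + a * M))
  <= 3 * (E + Mm) * (b ^ 2 / 2 + a ^ 2 + d ^ 2).
Proof.
  intros [Hn1 Hn2]%Rabs_le_between [Hm1 Hm2]%Rabs_le_between.
  assert (sq_mul : forall z w, 0 <= w -> 0 <= z ^ 2 * w)
    by (intros; apply Rmult_le_pos; [apply pow2_ge_0 | lra]).
  (* Squares times slacks, as in
     (x^2 + y^2) Mm - 2 x y M = ((x + y)^2 (Mm - M) + (x - y)^2 (Mm + M)) / 2. *)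
  pose proof (sq_mul (a + b) (Mm + M)). pose proof (sq_mul (a - b) (Mm - M)).
  pose proof (sq_mul (a + b) (Mm - M)). pose proof (sq_mul (a - b) (Mm + M)).
  pose proof (sq_mul (d + a) (Mm + M)). pose proof (sq_mul (d - a) (Mm - M)).
  pose proof (sq_mul (d + a) (Mm - M)). pose proof (sq_mul (d - a) (Mm + M)).
  pose proof (sq_mul (d + b) (E + nu)). pose proof (sq_mul (d - b) (E - nu)).
  pose proof (sq_mul (d + b) (E - nu)). pose proof (sq_mul (d - b) (E + nu)).
  pose proof (sq_mul a (E + nu)). pose proof (sq_mul a (E - nu)).
  pose proof (sq_mul b (E + nu)). pose proof (sq_mul b (E - nu)).
  pose proof (sq_mul d (E + nu)). pose proof (sq_mul d (E - nu)).
  pose proof (sq_mul a (Mm + M)). pose proof (sq_mul a (Mm - M)).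
  pose proof (sq_mul b (Mm + M)). pose proof (sq_mul b (Mm - M)).
  pose proof (sq_mul d (Mm + M)). pose proof (sq_mul d (Mm - M)).
  apply Rabs_le; split; lra.
Qed.

Lemma Rabs_normalized_third_le (a b d zeta mu nu delta V k : R) :
  1 <= k -> Rabs mu <= V -> Rabs zeta <= k -> Rabs delta <= 2 * k * V + k ^ 2 * Rabs nu ->
  Rabs ((- b ^ 2 * nu - 2 * a * b * (mu - zeta * nu) - a ^ 2 * nu)
        + 2 * d * (b * nu / 2 + a * (mu - zeta * nu))
        + delta * (b ^ 2 / 2 + a ^ 2 + d ^ 2))
  <= (5 * k * V + 8 * k ^ 2 * Rabs nu) * (b ^ 2 / 2 + a ^ 2 + d ^ 2).
Proof.
  intros Hk Hmu Hzeta Hdelta.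
  set (W := b ^ 2 / 2 + a ^ 2 + d ^ 2).
  assert (HW : 0 <= W) by (unfold W; nra).
  assert (Hnu : 0 <= Rabs nu) by apply Rabs_pos.
  assert (HV : 0 <= V) by (eapply Rle_trans; [apply Rabs_pos | exact Hmu]).
  assert (HM : Rabs (mu - zeta * nu) <= V + k * Rabs nu).
  { unfold Rminus. eapply Rle_trans; [apply Rabs_triang|]. rewrite Rabs_Ropp, Rabs_mult.
    pose proof (Rabs_pos zeta). nra. }
  pose proof (Rabs_normalized_cross_le a b d (mu - zeta * nu) nu (Rabs nu) (V + k * Rabs nu)
    (Rle_refl _) HM) as Hcross.
  assert (Hdelta_W : Rabs (delta * W) <= (2 * k * V + k ^ 2 * Rabs nu) * W).
  { rewrite Rabs_mult, (Rabs_pos_eq W) by exact HW. apply Rmult_le_compat_r; auto. }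
  assert (H1 : 0 <= (k - 1) * V * W) by (apply Rmult_le_pos; [apply Rmult_le_pos|]; lra).
  assert (H2 : 0 <= (7 * k ^ 2 - 3 * k - 3) * Rabs nu * W)
    by (apply Rmult_le_pos; [apply Rmult_le_pos|]; nra).
  eapply Rle_trans; [apply Rabs_triang|]. fold W in Hcross |- *.
  nra.
Qed.

Lemma Rabs_div_sqrt_le r Y k : 0 < r -> 0 <= k -> Y ^ 2 / r <= k ^ 2 -> Rabs (Y / sqrt r) <= k.
Proof.
  intros Hr Hk HY.
  assert (E : (Y / sqrt r) ^ 2 = Y ^ 2 / r).
  { rewrite <- (sqrt_sqrt r) at 2 by lra. field. apply Rgt_not_eq, sqrt_lt_R0; lra. }
  rewrite <- pow2_abs in E. pose proof (Rabs_pos (Y / sqrt r)). nra.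
Qed.

Lemma Rabs_div_le p c V : 0 < c -> Rabs p <= V -> Rabs (p / c) <= V / c.
Proof.
  intros Hc Hp. unfold Rdiv. rewrite Rabs_mult, Rabs_inv, (Rabs_pos_eq c) by lra.
  apply Rmult_le_compat_r; [left; apply Rinv_0_lt_compat|]; lra.
Qed.

Section NormalizedLogPhi.
Variables (r Y V k : R).
Hypothesis r_pos : 0 < r.
Hypothesis k_ge1 : 1 <= k.
Hypothesis Y_le : Y ^ 2 / r <= k ^ 2.

Lemma Rabs_dlogphi_sub_le p q : Rabs p <= V ->
  Rabs (dlogphi Y r p q - (- q / (2 * r))) <= k * V / sqrt r + k ^ 2 * Rabs q / (2 * r).
Proof.
  intros Hp.
  pose proof (Rabs_div_sqrt_le r Y k r_pos ltac:(lra) Y_le) as Hzeta.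
  pose proof (sqrt_lt_R0 r r_pos) as Hs0. pose proof (sqrt_sqrt r (Rlt_le _ _ r_pos)) as Hs.
  pose proof (Rabs_div_le p (sqrt r) V Hs0 Hp) as Hmu.
  set (s := sqrt r) in *.
  assert (E : dlogphi Y r p q - (- q / (2 * r)) = (Y / s) * (p / s) - (Y / s) ^ 2 * (q / r) / 2)
    by (unfold dlogphi; rewrite <- Hs; field; lra).
  assert (Enu : Rabs (q / r) = Rabs q / r)
    by (unfold Rdiv; rewrite Rabs_mult, Rabs_inv, (Rabs_pos_eq r); lra).
  rewrite E. set (zeta := Y / s) in *. set (mu := p / s) in *.
  eapply Rle_trans; [apply Rabs_triang|]. rewrite Rabs_Ropp, Rabs_mult.
  unfold Rdiv at 1. rewrite !Rabs_mult, <- RPow_abs, Rabs_inv, (Rabs_pos_eq 2), Enu by lra.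
  pose proof (Rabs_pos zeta). pose proof (Rabs_pos mu). pose proof (Rabs_pos q).
  assert (Hzz : Rabs zeta ^ 2 <= k ^ 2) by (apply pow_incr; lra).
  assert (Hq : 0 <= Rabs q / r) by (apply Rdiv_le_0_compat; lra).
  replace (k * V / s) with (k * (V / s)) by (unfold Rdiv; ring).
  replace (k ^ 2 * Rabs q / (2 * r)) with (k ^ 2 * (Rabs q / r) * / 2) by (field; lra).
  nra.
Qed.

(* The substitution a = (p1 - Y q1 / r) / sqrt r, b = q1 / r, zeta = Y / sqrt r,
   mu = p2 / sqrt r, nu = q2 / r makes every derivative of log phi_NH scale-free. *)
Lemma Rabs_d3logphi_term_le p1 q1 p2 q2 d delta : Rabs p2 <= V ->
  Rabs delta <= 2 * k * V / sqrt r + k ^ 2 * Rabs q2 / r ->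
  Rabs (d3logphi Y r p1 q1 p2 q2 + 2 * d * d2logphi Y r p1 q1 p2 q2
        + delta * (d2logphi Y r p1 q1 p1 q1 + d ^ 2))
  <= (5 * k * V / sqrt r + 8 * k ^ 2 * Rabs q2 / r) * (d2logphi Y r p1 q1 p1 q1 + d ^ 2).
Proof.
  intros Hp Hdelta.
  pose proof (Rabs_div_sqrt_le r Y k r_pos ltac:(lra) Y_le) as Hzeta.
  pose proof (sqrt_lt_R0 r r_pos) as Hs0. pose proof (sqrt_sqrt r (Rlt_le _ _ r_pos)) as Hs.
  pose proof (Rabs_div_le p2 (sqrt r) V Hs0 Hp) as Hmu.
  set (s := sqrt r) in *.
  set (a := (p1 - Y / r * q1) / s). set (b := q1 / r).
  set (zeta := Y / s) in *. set (mu := p2 / s) in *. set (nu := q2 / r).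
  assert (EQ : d2logphi Y r p1 q1 p1 q1 = b ^ 2 / 2 + a ^ 2)
    by (unfold d2logphi, a, b; rewrite <- Hs; field; lra).
  assert (EP : d2logphi Y r p1 q1 p2 q2 = b * nu / 2 + a * (mu - zeta * nu))
    by (unfold d2logphi, a, b, nu, mu, zeta; rewrite <- Hs; field; lra).
  assert (ER : d3logphi Y r p1 q1 p2 q2 = - b ^ 2 * nu - 2 * a * b * (mu - zeta * nu) - a ^ 2 * nu)
    by (unfold d3logphi, a, b, nu, mu, zeta; rewrite <- Hs; field; lra).
  assert (Enu : Rabs nu = Rabs q2 / r)
    by (unfold nu, Rdiv; rewrite Rabs_mult, Rabs_inv, (Rabs_pos_eq r); lra).
  rewrite EQ, EP, ER.
  replace (5 * k * V / s + 8 * k ^ 2 * Rabs q2 / r)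
    with (5 * k * (V / s) + 8 * k ^ 2 * Rabs nu) by (rewrite Enu; field; lra).
  apply Rabs_normalized_third_le; auto.
  rewrite Enu. unfold Rdiv in *. rewrite <- !Rmult_assoc. exact Hdelta.
Qed.

End NormalizedLogPhi.

Section LogSum.
Variables (l : list nat) (y : nat -> R) (r : R).

Local Notation w := (fun i => phiNH (y i) r).

Definition dlogsum (ux : nat -> R) (ut : R) : R := wmean l w (fun i => dlogphi (y i) r (ux i) ut).

Definition d2logsum (ux : nat -> R) (ut : R) : R :=
  wmean l w (fun i => d2logphi (y i) r (ux i) ut (ux i) ut
                      + (dlogphi (y i) r (ux i) ut - dlogsum ux ut) ^ 2).

Definition d3logsum (ux : nat -> R) (ut : R) (vx : nat -> R) (vt : R) : R :=
  wmean l w (fun i => d3logphi (y i) r (ux i) ut (vx i) vt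
    + 2 * (dlogphi (y i) r (ux i) ut - dlogsum ux ut) * d2logphi (y i) r (ux i) ut (vx i) vt
    + (dlogphi (y i) r (vx i) vt - dlogsum vx vt)
      * (d2logphi (y i) r (ux i) ut (ux i) ut + (dlogphi (y i) r (ux i) ut - dlogsum ux ut) ^ 2)).

Hypothesis l_nonnil : l <> nil.
Hypothesis r_pos : 0 < r.

Let w_pos : forall i, In i l -> 0 < w i := fun i _ => phiNH_pos (y i) r r_pos.

Lemma d2logsum_nonneg ux ut : 0 <= d2logsum ux ut.
Proof.
  apply (wmean_nonneg l w l_nonnil w_pos). intros i _.
  pose proof (d2logphi_diag_nonneg (y i) r (ux i) ut r_pos).
  pose proof (pow2_ge_0 (dlogphi (y i) r (ux i) ut - dlogsum ux ut)).
  lra.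
Qed.

Lemma Rabs_d3logsum_le ux ut vx vt V k : 1 <= k ->
  (forall i, In i l -> Rabs (vx i) <= V) -> (forall i, In i l -> y i ^ 2 / r <= k ^ 2) ->
  Rabs (d3logsum ux ut vx vt)
  <= (5 * k * V / sqrt r + 8 * k ^ 2 * Rabs vt / r) * d2logsum ux ut.
Proof.
  intros Hk HV HY.
  set (B := k * V / sqrt r + k ^ 2 * Rabs vt / (2 * r)).
  assert (HZ : forall i, In i l -> Rabs (dlogphi (y i) r (vx i) vt - (- vt / (2 * r))) <= B)
    by (intros i Hi; apply Rabs_dlogphi_sub_le; auto).
  assert (Hn : Rabs (dlogsum vx vt - (- vt / (2 * r))) <= B)
    by (apply (Rabs_wmean_sub_le l w l_nonnil w_pos); exact HZ).
  unfold d3logsum, d2logsum. rewrite <- wmean_scal by auto.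
  apply (Rabs_wmean_le l w l_nonnil w_pos). intros i Hi.
  apply Rabs_d3logphi_term_le; auto.
  (* Z_i and its mean <Z> both lie within B of -vt / (2 r). *)
  replace (dlogphi (y i) r (vx i) vt - dlogsum vx vt)
    with ((dlogphi (y i) r (vx i) vt - (- vt / (2 * r))) - (dlogsum vx vt - (- vt / (2 * r))))
    by ring.
  eapply Rle_trans; [apply Rabs_triang|]. rewrite Rabs_Ropp.
  pose proof (HZ i Hi). pose proof (sqrt_lt_R0 r r_pos).
  replace (2 * k * V / sqrt r + k ^ 2 * Rabs vt / r) with (2 * B) by (unfold B; field; lra).
  lra.
Qed.

End LogSum.

Lemma locally_pos_affine c q a0 : 0 < c + a0 * q -> locally a0 (fun a => 0 < c + a * q).
Proof.
  intros H.
  assert (Hcont : continuous (fun a => c + a * q) a0).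
  { apply (ex_derive_continuous (fun a => c + a * q)). auto_derive. exact I. }
  apply (Hcont (fun u => 0 < u)).
  apply (locally_open (fun u => 0 < u)); [apply open_gt | auto | exact H].
Qed.

Lemma is_derive_plane_u c p q a b : is_derive (fun a => c + a * p + b * q) a p.
Proof. auto_derive; [exact I | ring]. Qed.

Lemma is_derive_plane_v c p q a b : is_derive (fun b => c + a * p + b * q) b q.
Proof. auto_derive; [exact I | ring]. Qed.

Section Plane.
Variables (l : list nat) (y : nat -> R) (r : R) (ux : nat -> R) (ut : R) (vx : nat -> R) (vt : R).
Hypothesis l_nonnil : l <> nil.

Local Notation ypl a b := (fun i => y i + a * ux i + b * vx i).
Local Notation tpl a b := (r + a * ut + b * vt).

Lemma locally_plane_pos_u a b : 0 < tpl a b -> locally a (fun a => 0 < tpl a b).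
Proof.
  intros H. apply filter_imp with (P := fun a => 0 < r + b * vt + a * ut); [intros; lra|].
  apply locally_pos_affine. lra.
Qed.

Lemma locally_plane_pos_v b : 0 < tpl 0 b -> locally b (fun b => 0 < tpl 0 b).
Proof. apply (locally_pos_affine (r + 0 * ut) vt b). Qed.

Lemma lsum_plane_pos a b : 0 < tpl a b -> 0 < lsum l (fun i => phiNH (ypl a b i) (tpl a b)).
Proof. intros HT. apply lsum_pos; auto. intros i _. apply phiNH_pos; exact HT. Qed.

Lemma is_derive_phiNH_plane_u i a b : 0 < tpl a b ->
  is_derive (fun a => phiNH (ypl a b i) (tpl a b)) a
    (phiNH (ypl a b i) (tpl a b) * dlogphi (ypl a b i) (tpl a b) (ux i) ut).
Proof.
  apply (is_derive_phiNH (fun a => ypl a b i) (fun a => tpl a b));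
    [apply is_derive_plane_u | apply is_derive_plane_u].
Qed.

Lemma is_derive_ln_lsum_plane_u a b : 0 < tpl a b ->
  is_derive (fun a => ln (lsum l (fun i => phiNH (ypl a b i) (tpl a b)))) a
    (dlogsum l (ypl a b) (tpl a b) ux ut).
Proof.
  intros HT.
  apply (is_derive_ln_lsum l (fun i a => phiNH (ypl a b i) (tpl a b))
           (fun i => dlogphi (ypl a b i) (tpl a b) (ux i) ut)).
  - exact (lsum_plane_pos a b HT).
  - intro i. exact (is_derive_phiNH_plane_u i a b HT).
Qed.

Lemma is_derive_dlogsum_plane_u a b : 0 < tpl a b ->
  is_derive (fun a => dlogsum l (ypl a b) (tpl a b) ux ut) a (d2logsum l (ypl a b) (tpl a b) ux ut).
Proof.
  intros HT.
  assert (HX : forall i, is_derive (fun a => dlogphi (ypl a b i) (tpl a b) (ux i) ut) a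
                 (d2logphi (ypl a b i) (tpl a b) (ux i) ut (ux i) ut)).
  { intro i. apply (is_derive_dlogphi (fun a => ypl a b i) (fun a => tpl a b));
      [apply is_derive_plane_u | apply is_derive_plane_u | lra]. }
  pose proof (is_derive_wmean l _ _ _ _ a (lsum_plane_pos a b HT)
    (fun i => is_derive_phiNH_plane_u i a b HT) HX) as H.
  rewrite (wmean_variance l _ l_nonnil) in H by (intros; apply phiNH_pos; exact HT).
  exact H.
Qed.

Lemma is_derive_d2logsum_plane_v b : 0 < tpl 0 b ->
  is_derive (fun b => d2logsum l (ypl 0 b) (tpl 0 b) ux ut) b
    (d3logsum l (ypl 0 b) (tpl 0 b) ux ut vx vt).
Proof.
  intros HT.
  apply (is_derive_wmean_variance l (fun i b => phiNH (ypl 0 b i) (tpl 0 b))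
    (fun i b => dlogphi (ypl 0 b i) (tpl 0 b) (ux i) ut)
    (fun i b => d2logphi (ypl 0 b i) (tpl 0 b) (ux i) ut (ux i) ut)
    (fun i => dlogphi (ypl 0 b i) (tpl 0 b) (vx i) vt)
    (fun i => d2logphi (ypl 0 b i) (tpl 0 b) (ux i) ut (vx i) vt)
    (fun i => d3logphi (ypl 0 b i) (tpl 0 b) (ux i) ut (vx i) vt)); [exact l_nonnil | | intro i ..].
  - eapply filter_imp; [|apply locally_plane_pos_v; exact HT].
    intros b' Hb' i _. apply phiNH_pos; exact Hb'.
  - apply (is_derive_phiNH (fun b => ypl 0 b i) (fun b => tpl 0 b));
      [apply is_derive_plane_v | apply is_derive_plane_v | exact HT].
  - apply (is_derive_dlogphi (fun b => ypl 0 b i) (fun b => tpl 0 b));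
      [apply is_derive_plane_v | apply is_derive_plane_v | lra].
  - apply (is_derive_d2logphi (fun b => ypl 0 b i) (fun b => tpl 0 b));
      [apply is_derive_plane_v | apply is_derive_plane_v | lra].
Qed.

Lemma Derive2_ln_lsum_plane b : 0 < tpl 0 b ->
  Derive (fun a => Derive (fun a' => ln (lsum l (fun i => phiNH (ypl a' b i) (tpl a' b)))) a) 0
  = d2logsum l (ypl 0 b) (tpl 0 b) ux ut.
Proof.
  intros HT.
  rewrite (Derive_ext_loc _ (fun a => dlogsum l (ypl a b) (tpl a b) ux ut)).
  - apply is_derive_unique, is_derive_dlogsum_plane_u; exact HT.
  - eapply filter_imp; [|apply locally_plane_pos_u; exact HT].
    intros a Ha. apply is_derive_unique, is_derive_ln_lsum_plane_u; exact Ha.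
Qed.

Lemma Derive3_ln_lsum_plane : 0 < r ->
  Derive (fun b => Derive (fun a =>
    Derive (fun a' => ln (lsum l (fun i => phiNH (ypl a' b i) (tpl a' b)))) a) 0) 0
  = d3logsum l (ypl 0 0) (tpl 0 0) ux ut vx vt.
Proof.
  intros Hr. assert (HT : 0 < tpl 0 0) by lra.
  rewrite (Derive_ext_loc _ (fun b => d2logsum l (ypl 0 b) (tpl 0 b) ux ut)).
  - apply is_derive_unique, is_derive_d2logsum_plane_v; exact HT.
  - eapply filter_imp; [|apply locally_plane_pos_v; exact HT].
    intros b Hb. apply Derive2_ln_lsum_plane; exact Hb.
Qed.

End Plane.

Lemma seq_0_neq_nil N : (1 <= N)%nat -> seq 0 N <> nil.
Proof. destruct N; [lia | discriminate]. Qed.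

Lemma hess_form_logPhi N y r ux ut : (1 <= N)%nat -> 0 < r ->
  hess_form (logPhi N) y r ux ut = d2logsum (seq 0 N) y r ux ut.
Proof.
  intros HN Hr.
  transitivity
    (d2logsum (seq 0 N) (fun i => y i + 0 * ux i + 0 * ux i) (r + 0 * ut + 0 * ut) ux ut).
  - exact (Derive2_ln_lsum_plane (seq 0 N) y r ux ut ux ut (seq_0_neq_nil N HN) 0 ltac:(lra)).
  - f_equal; [apply functional_extensionality; intro i|]; ring.
Qed.

Lemma third_form_logPhi N y r ux ut vx vt : (1 <= N)%nat -> 0 < r ->
  third_form (logPhi N) y r ux ut vx vt = d3logsum (seq 0 N) y r ux ut vx vt.
Proof.
  intros HN Hr.
  transitivity (d3logsum (seq 0 N) (fun i => y i + 0 * ux i + 0 * vx i) (r + 0 * ut + 0 * vt)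
                  ux ut vx vt).
  - exact (Derive3_ln_lsum_plane (seq 0 N) y r ux ut vx vt (seq_0_neq_nil N HN) Hr).
  - f_equal; [apply functional_extensionality; intro i|]; ring.
Qed.

Definition lmax (l : list nat) (g : nat -> R) : R := fold_right Rmax 0 (map g l).

Lemma lmax_nonneg l g : 0 <= lmax l g.
Proof.
  unfold lmax. induction l as [|j l IH]; simpl; [lra|].
  eapply Rle_trans; [exact IH | apply Rmax_r].
Qed.

Lemma le_lmax l g i : In i l -> g i <= lmax l g.
Proof.
  unfold lmax. induction l as [|j l IH]; simpl; [tauto|].
  intros [<- | Hi]; [apply Rmax_l | eapply Rle_trans; [apply IH, Hi | apply Rmax_r]].
Qed.

Lemma lmax_le_compat l g h : (forall i, In i l -> g i <= h i) -> lmax l g <= lmax l h.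
Proof.
  unfold lmax. induction l as [|j l IH]; intros H; simpl; [lra|].
  apply Rmax_le_compat; [apply H; simpl; auto | apply IH; intros; apply H; simpl; auto].
Qed.

Lemma le_real_Lub_Rbar (E : R -> Prop) e M :
  E e -> (forall z, E z -> z <= M) -> e <= real (Lub_Rbar E).
Proof.
  intros He HM. destruct (Lub_Rbar_correct E) as [Hub Hleast].
  specialize (Hub e He). specialize (Hleast (Finite M) HM).
  destruct (Lub_Rbar E); simpl in *; tauto.
Qed.

Lemma real_Glb_Rbar_between (E : R -> Prop) e M :
  E e -> (forall z, E z -> M <= z) -> M <= real (Glb_Rbar E) <= e.
Proof.
  intros He HM. destruct (Glb_Rbar_correct E) as [Hlb Hgreatest].
  specialize (Hlb e He). specialize (Hgreatest (Finite M) HM).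
  destruct (Glb_Rbar E); simpl in *; tauto.
Qed.

Section Segment.
Variables (N : nat) (x dx : nat -> R) (t dt : R).
Hypothesis t_pos : 0 < t.
Hypothesis t_dt_pos : 0 < t + dt.

Lemma seg_t_ge_Rmin s : 0 <= s <= 1 -> Rmin t (t + dt) <= seg_t t dt s.
Proof. intros Hs. unfold seg_t, Rmin. destruct Rle_dec; nra. Qed.

Lemma t_star_spec : 0 < t_star t dt /\ forall s, 0 <= s <= 1 -> t_star t dt <= seg_t t dt s.
Proof.
  assert (Hmin : 0 < Rmin t (t + dt)) by (apply Rmin_glb_lt; lra).
  assert (H : forall s, 0 <= s <= 1 -> Rmin t (t + dt) <= t_star t dt <= seg_t t dt s).
  { intros s Hs. apply real_Glb_Rbar_between; [exists s; auto|].
    intros z [s' [Hs' ->]]. apply seg_t_ge_Rmin; exact Hs'. }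
  split; [|intros s Hs; apply H, Hs].
  destruct (H 0 ltac:(lra)); lra.
Qed.

Lemma K_seg_ge s i : 0 <= s <= 1 -> (i < N)%nat ->
  seg_x x dx s i ^ 2 / seg_t t dt s <= K_seg N x dx t dt.
Proof.
  intros Hs Hi.
  assert (Hmin : 0 < Rmin t (t + dt)) by (apply Rmin_glb_lt; lra).
  eapply Rle_trans; [apply (le_lmax (seq 0 N) (fun i => seg_x x dx s i ^ 2 / seg_t t dt s));
                     apply in_seq; lia|].
  apply (le_real_Lub_Rbar _ _
           (lmax (seq 0 N) (fun i => (Rabs (x i) + Rabs (dx i)) ^ 2 / Rmin t (t + dt))));
    [exists s; auto|].
  intros z [s' [Hs' ->]]. apply lmax_le_compat. intros j _.
  pose proof (seg_t_ge_Rmin s' Hs').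
  assert (Hx : Rabs (seg_x x dx s' j) <= Rabs (x j) + Rabs (dx j)).
  { unfold seg_x. eapply Rle_trans; [apply Rabs_triang|].
    rewrite Rabs_mult, (Rabs_pos_eq s') by lra. pose proof (Rabs_pos (dx j)). nra. }
  rewrite <- (pow2_abs (seg_x x dx s' j)).
  unfold Rdiv. apply Rmult_le_compat.
  - apply pow2_ge_0.
  - left; apply Rinv_0_lt_compat; lra.
  - apply pow_incr. split; [apply Rabs_pos | exact Hx].
  - apply Rinv_le_contravar; lra.
Qed.

Lemma star_norm_ge vx vt r : t_star t dt <= r ->
  let k := sqrt (Rmax (K_seg N x dx t dt) 1) in
  5 * k * Defs.maxN N (fun i => Rabs (vx i)) / sqrt r + 8 * k ^ 2 * Rabs vt / r
  <= star_norm N x dx t dt vx vt.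
Proof.
  intros Hr k. destruct t_star_spec as [Hts _].
  set (V := Defs.maxN N (fun i => Rabs (vx i))).
  assert (HV : 0 <= V) by apply lmax_nonneg.
  assert (Hk : 0 <= k) by apply sqrt_pos.
  assert (Hk2 : k ^ 2 = Rmax (K_seg N x dx t dt) 1)
    by (apply pow2_sqrt; pose proof (Rmax_r (K_seg N x dx t dt) 1); lra).
  assert (Hsq : 0 < sqrt (t_star t dt) <= sqrt r)
    by (split; [apply sqrt_lt_R0 | apply sqrt_le_1_alt]; lra).
  pose proof (Rabs_pos vt).
  unfold star_norm, A_x, A_t. fold k V. rewrite <- Hk2.
  assert (H1 : 5 * k * V / sqrt r <= 8 * k / sqrt (t_star t dt) * V).
  { replace (8 * k / sqrt (t_star t dt) * V) with (8 * k * V * / sqrt (t_star t dt))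
      by (field; lra).
    apply Rmult_le_compat; [nra | left; apply Rinv_0_lt_compat; lra | nra |].
    apply Rinv_le_contravar; lra. }
  assert (H2 : 8 * k ^ 2 * Rabs vt / r <= 16 * k ^ 2 / t_star t dt * Rabs vt).
  { replace (16 * k ^ 2 / t_star t dt * Rabs vt) with (16 * k ^ 2 * Rabs vt * / t_star t dt)
      by (field; lra).
    apply Rmult_le_compat; [nra | left; apply Rinv_0_lt_compat; lra | nra |].
    apply Rinv_le_contravar; lra. }
  lra.
Qed.

End Segment.

Theorem proposition6p10 (N : nat) (x dx : nat -> R) (t dt : R) :
  (1 <= N)%nat -> 0 < t -> 0 < t + dt ->
  gen_self_concordant N 1 (logPhi N)
    (fun y r => exists s, 0 <= s <= 1 /\
        (forall i, (i < N)%nat -> y i = seg_x x dx s i) /\ r = seg_t t dt s)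
    (star_norm N x dx t dt).
Proof.
  intros HN Ht Htd y r [s [Hs [Hy ->]]] ux ut vx vt.
  destruct (t_star_spec t dt Ht Htd) as [Hts Hle]. specialize (Hle s Hs).
  assert (Hr : 0 < seg_t t dt s) by lra.
  set (k := sqrt (Rmax (K_seg N x dx t dt) 1)).
  assert (Hk : 1 <= k) by (rewrite <- sqrt_1; apply sqrt_le_1_alt, Rmax_r).
  assert (Hk2 : k ^ 2 = Rmax (K_seg N x dx t dt) 1)
    by (apply pow2_sqrt; pose proof (Rmax_r (K_seg N x dx t dt) 1); lra).
  rewrite hess_form_logPhi, third_form_logPhi, Rmult_1_l by auto.
  eapply Rle_trans.
  - apply Rabs_d3logsum_le with (V := Defs.maxN N (fun i => Rabs (vx i))) (k := k);
      [apply seq_0_neq_nil, HN | exact Hr | exact Hk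
      | intros i Hi; exact (le_lmax (seq 0 N) (fun i => Rabs (vx i)) i Hi) |].
    intros i Hi%in_seq. rewrite Hk2, Hy by lia.
    eapply Rle_trans; [apply (K_seg_ge N x dx t dt Ht Htd s i Hs); lia | apply Rmax_l].
  - apply Rmult_le_compat_r;
      [apply d2logsum_nonneg; [apply seq_0_neq_nil, HN | exact Hr] | apply star_norm_ge; auto].
Qed.
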